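(* Let $F,G\colon(\mathcal{C},S)\to(\mathcal{D},S')$ be morphisms of quasi-schemoids. If $F\simeq G$, then $U(F)\simeq_S U(G)$. If moreover $(\mathcal{C},S)=K(\mathcal{C})$ is a discrete quasi-schemoid, then $F\simeq G$ if and only if $U(F)\simeq_S U(G)$.
   Context: A quasi-schemoid is a pair $(\mathcal{C},S)$ where $\mathcal{C}$ is a small category and $S$ is a partition of the set $mor(\mathcal{C})$ of all morphisms of $\mathcal{C}$ such that for all $\sigma,\tau,\mu\in S$ and all $f,g\in\mu$ the sets $\{(a,b)\in\sigma\times\tau : s(a)=t(b),\ a\circ b=f\}$ and $\{(a,b)\in\sigma\times\tau : s(a)=t(b),\ a\circ b=g\}$ have the same cardinality. A morphism of quasi-schemoids $(\mathcal{C},S)\to(\mathcal{D},S')$ is a functor $F\colon\mathcal{C}\to\mathcal{D}$ such that for every $\sigma\in S$ there is $\tau\in S'$ with $F(\sigma)\subset\tau$. $U$ denotes the forgetful functor from quasi-schemoids to small categories, $U(\mathcal{C},S)=\mathcal{C}$, and for a small category $\mathcal{C}$, $K(\mathcal{C})=(\mathcal{C},\{\{f\}\}_{f\in mor(\mathcal{C})})$ is the discrete quasi-schemoid. The product of quasi-schemoids is $(\mathcal{C},S)\times(\mathcal{E},S')=(\mathcal{C}\times\mathcal{E},\{\sigma\times\tau\})$. Let $[1]$ be the category with objects $0,1$ and one non-identity morphism $u\colon0\to1$, and $I=K([1])$. A homotopy $H\colon F\Rightarrow G$ between morphisms $F,G\colon(\mathcal{C},S)\to(\mathcal{D},S')$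 is a morphism of quasi-schemoids $H\colon(\mathcal{C},S)\times I\to(\mathcal{D},S')$ with $H\circ\varepsilon_0=F$, $H\circ\varepsilon_1=G$, where $\varepsilon_i(a)=(a,i)$, $\varepsilon_i(f)=(f,1_i)$. $F\sim G$ means there is a homotopy $F\Rightarrow G$ or $G\Rightarrow F$; $F\simeq G$ means there is a finite chain $F=F_0\sim F_1\sim\cdots\sim F_n=G$. The strong homotopy relation $\simeq_S$ on functors between small categories is defined in the same way, using functors $\mathcal{C}\times[1]\to\mathcal{D}$ (in the category of small categories) in place of morphisms $(\mathcal{C},S)\times I\to(\mathcal{D},S')$. *)

From Stdlib Require Import Relations Eqdep_dec Bool.

Set Implicit Arguments.
Unset Strict Implicit.

Record Category := {
  Ob : Type;
  Hom : Ob -> Ob -> Type;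
  cid : forall x, Hom x x;
  ccomp : forall x y z, Hom y z -> Hom x y -> Hom x z;
  ccomp_id_l : forall x y (f : Hom x y), ccomp (cid y) f = f;
  ccomp_id_r : forall x y (f : Hom x y), ccomp f (cid x) = f;
  ccomp_assoc : forall x y z w (h : Hom z w) (g : Hom y z) (f : Hom x y),
      ccomp h (ccomp g f) = ccomp (ccomp h g) f
}.
Arguments cid {c} x.
Arguments Hom : clear implicits.
Arguments ccomp {c x y z} _ _.

(* an element of mor(C): a morphism together with its source and target *)
Record Arr (C : Category) := mkArr { src : Ob C; tgt : Ob C; arr : Hom C src tgt }.
Arguments mkArr {C src tgt} arr.

Record CPair (C : Category) := {
  cx : Ob C; cy : Ob C; cz : Ob C; ca : Hom C cy cz; cb : Hom C cx cy }.

Definition MorFamily (C : Category) := (Arr C -> Prop) -> Prop.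

Definition is_partition (C : Category) (S : MorFamily C) : Prop :=
  (forall sigma, S sigma -> exists a, sigma a) /\
  (forall a, exists sigma, S sigma /\ sigma a) /\
  (forall sigma tau a, S sigma -> S tau -> sigma a -> tau a ->
     forall b, sigma b <-> tau b).

(* "same cardinality" = existence of a bijection *)
Definition equipotent (A B : Type) : Prop :=
  exists (f : A -> B) (g : B -> A),
    (forall x, g (f x) = x) /\ (forall y, f (g y) = y).

Definition fiber (C : Category) (sigma tau : Arr C -> Prop) (f : Arr C) : Type :=
  { p : CPair C | sigma (mkArr (ca p)) /\ tau (mkArr (cb p)) /\
                  mkArr (ccomp (ca p) (cb p)) = f }.

Definition is_quasi_schemoid (C : Category) (S : MorFamily C) : Prop :=
  is_partition S /\
  forall sigma tau mu, S sigma -> S tau -> S mu ->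
    forall f g, mu f -> mu g -> equipotent (fiber sigma tau f) (fiber sigma tau g).

Record Functor (C D : Category) := {
  fobj :> Ob C -> Ob D;
  fmap : forall x y, Hom C x y -> Hom D (fobj x) (fobj y);
  fmap_id : forall x, fmap (cid x) = cid (fobj x);
  fmap_comp : forall x y z (g : Hom C y z) (f : Hom C x y),
      fmap (ccomp g f) = ccomp (fmap g) (fmap f)
}.
Arguments fmap {C D} f {x y} _ : rename.

Definition arrF (C D : Category) (F : Functor C D) (a : Arr C) : Arr D :=
  mkArr (fmap F (arr a)).

Definition feq (C D : Category) (F G : Functor C D) : Prop :=
  (forall x, F x = G x) /\ (forall a, arrF F a = arrF G a).

Definition fcomp (C D E : Category) (G : Functor D E) (F : Functor C D)
  : Functor C E.
Proof.
  refine {| fobj := fun x => G (F x);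
            fmap := fun x y f => fmap G (fmap F f) |}.
  - intros x; rewrite fmap_id; apply fmap_id.
  - intros x y z g f; rewrite fmap_comp; apply fmap_comp.
Defined.

Definition prodCat (C E : Category) : Category.
Proof.
  refine {| Ob := (Ob C * Ob E)%type;
            Hom := fun p q => (Hom C (fst p) (fst q) * Hom E (snd p) (snd q))%type;
            cid := fun p => (cid (fst p), cid (snd p));
            ccomp := fun p q r g f => (ccomp (fst g) (fst f), ccomp (snd g) (snd f)) |}.
  - intros p q [f1 f2]; simpl; rewrite !ccomp_id_l; reflexivity.
  - intros p q [f1 f2]; simpl; rewrite !ccomp_id_r; reflexivity.
  - intros p q r s [h1 h2] [g1 g2] [f1 f2]; simpl; rewrite !ccomp_assoc; reflexivity.
Defined.

Definition arr_fst (C E : Category) (a : Arr (prodCat C E)) : Arr C :=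
  @mkArr C (fst (src a)) (fst (tgt a)) (fst (arr a)).
Definition arr_snd (C E : Category) (a : Arr (prodCat C E)) : Arr E :=
  @mkArr E (snd (src a)) (snd (tgt a)) (snd (arr a)).

Definition prodFam (C E : Category) (S : MorFamily C) (S' : MorFamily E)
  : MorFamily (prodCat C E) :=
  fun P => exists sigma tau, S sigma /\ S' tau /\
     forall a, P a <-> (sigma (arr_fst a) /\ tau (arr_snd a)).

(* discrete partition {{f}} : the partition of K(C) *)
Definition discFam (C : Category) : MorFamily C :=
  fun sigma => exists f, forall a, sigma a <-> a = f.

Definition one_comp (x y z : bool) (g : implb y z = true) (f : implb x y = true)
  : implb x z = true.
Proof. destruct x, y, z; simpl in *; congruence. Defined.

Definition one_id (x : bool) : implb x x = true.
Proof. destruct x; reflexivity. Defined.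

Lemma bool_eq_irr (b c : bool) (p q : b = c) : p = q.
Proof. apply UIP_dec, bool_dec. Qed.

(* objects 0 := false, 1 := true; Hom x y is a singleton iff x <= y *)
Definition cat1 : Category.
Proof.
  refine {| Ob := bool; Hom := fun x y => implb x y = true;
            cid := one_id; ccomp := one_comp |}; intros; apply bool_eq_irr.
Defined.

Definition qs_morphism (C D : Category) (S : MorFamily C) (S' : MorFamily D)
  (F : Functor C D) : Prop :=
  forall sigma, S sigma -> exists tau, S' tau /\ forall a, sigma a -> tau (arrF F a).

Definition eps (C : Category) (i : bool) : Functor C (prodCat C cat1).
Proof.
  refine (@Build_Functor C (prodCat C cat1) (fun x => (x, i))
            (fun x y f => (f, cid (c := cat1) i) : Hom (prodCat C cat1) (x, i) (y, i)) _ _).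
  - intros x; reflexivity.
  - intros x y z g f; simpl; f_equal; apply bool_eq_irr.
Defined.

(* homotopy H : F => G of quasi-schemoid morphisms, with I = K([1]) *)
Definition qs_homotopy (C D : Category) (S : MorFamily C) (S' : MorFamily D)
  (F G : Functor C D) : Prop :=
  exists H : Functor (prodCat C cat1) D,
    qs_morphism (prodFam S (@discFam cat1)) S' H /\
    feq (fcomp H (eps C false)) F /\ feq (fcomp H (eps C true)) G.

Definition qs_sim (C D : Category) (S : MorFamily C) (S' : MorFamily D)
  (F G : Functor C D) : Prop :=
  qs_homotopy S S' F G \/ qs_homotopy S S' G F.

(* F ~= G : finite chain F = F0 ~ F1 ~ ... ~ Fn = G *)
Definition qs_htpc (C D : Category) (S : MorFamily C) (S' : MorFamily D)
  (F G : Functor C D) : Prop :=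
  clos_refl_trans (Functor C D) (qs_sim S S') F G.

Definition strong_homotopy (C D : Category) (F G : Functor C D) : Prop :=
  exists H : Functor (prodCat C cat1) D,
    feq (fcomp H (eps C false)) F /\ feq (fcomp H (eps C true)) G.

Definition strong_sim (C D : Category) (F G : Functor C D) : Prop :=
  strong_homotopy F G \/ strong_homotopy G F.

Definition strong_htpc (C D : Category) (F G : Functor C D) : Prop :=
  clos_refl_trans (Functor C D) (@strong_sim C D) F G.

(* Forgetting the partitions turns every homotopy of quasi-schemoid morphisms
   into a strong homotopy of the underlying functors, and hence every chain of
   homotopies into a chain of strong homotopies.  Conversely, when the source
   partition is discrete, so is the partition of C x I; any functor out of a
   discrete quasi-schemoid is a morphism into any quasi-schemoid (each
   singleton lands in the block containing its image), so every strong
   homotopy is already a homotopy of quasi-schemoids. *)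
From Stdlib Require Import Relations Setoid.

Lemma clos_refl_trans_incl (A : Type) (R1 R2 : relation A) :
  inclusion A R1 R2 -> inclusion A (clos_refl_trans A R1) (clos_refl_trans A R2).
Proof.
  intros HR x y Hxy; induction Hxy.
  - apply rt_step; auto.
  - apply rt_refl.
  - eapply rt_trans; eauto.
Qed.

Section Forget.

Variables (C D : Category) (S : MorFamily C) (S' : MorFamily D).

Lemma qs_homotopy_strong (F G : Functor C D) :
  qs_homotopy S S' F G -> strong_homotopy F G.
Proof. intros [H [_ HFG]]; exists H; exact HFG. Qed.

Lemma qs_sim_strong (F G : Functor C D) :
  qs_sim S S' F G -> strong_sim F G.
Proof. intros [HFG | HGF]; [left | right]; apply qs_homotopy_strong; assumption. Qed.

Lemma qs_htpc_strong (F G : Functor C D) :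
  qs_htpc S S' F G -> strong_htpc F G.
Proof. apply clos_refl_trans_incl; exact qs_sim_strong. Qed.

End Forget.

Definition pairArr {C E : Category} (f : Arr C) (g : Arr E) : Arr (prodCat C E) :=
  @mkArr (prodCat C E) (src f, src g) (tgt f, tgt g) (arr f, arr g).

Lemma pairArr_eta {C E : Category} (a : Arr (prodCat C E)) :
  a = pairArr (arr_fst a) (arr_snd a).
Proof. destruct a as [[s1 s2] [t1 t2] [h1 h2]]; reflexivity. Qed.

Lemma prodFam_discFam (C E : Category) (S : MorFamily C) (S' : MorFamily E) :
  (forall sigma, S sigma -> discFam sigma) ->
  (forall tau, S' tau -> discFam tau) ->
  forall P, prodFam S S' P -> discFam P.
Proof.
  intros HS HS' P [sigma [tau [Hsigma [Htau HP]]]].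
  destruct (HS sigma Hsigma) as [f Hf], (HS' tau Htau) as [g Hg].
  exists (pairArr f g); intros a; rewrite HP, Hf, Hg; split.
  - intros [Hfst Hsnd]; rewrite (pairArr_eta a), Hfst, Hsnd; reflexivity.
  - intros ->; destruct f, g; split; reflexivity.
Qed.

Lemma qs_morphism_of_discrete (C D : Category) (S : MorFamily C) (S' : MorFamily D)
  (H : Functor C D) :
  (forall sigma, S sigma -> discFam sigma) ->
  (forall b, exists tau, S' tau /\ tau b) ->
  qs_morphism S S' H.
Proof.
  intros Hdisc Hcover sigma Hsigma.
  destruct (Hdisc sigma Hsigma) as [f Hf].
  destruct (Hcover (arrF H f)) as [tau [Htau Hf_tau]].
  exists tau; split; [exact Htau |].
  intros a Ha; apply Hf in Ha; subst a; exact Hf_tau.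
Qed.

Lemma strong_htpc_qs_discrete (C D : Category) (S : MorFamily C) (S' : MorFamily D)
  (F G : Functor C D) :
  (forall sigma, S sigma -> discFam sigma) ->
  (forall b, exists tau, S' tau /\ tau b) ->
  strong_htpc F G -> qs_htpc S S' F G.
Proof.
  intros Hdisc Hcover.
  assert (Hhtp : forall X Y, strong_homotopy X Y -> qs_homotopy S S' X Y).
  { intros X Y [H HXY]; exists H; split; [| exact HXY].
    apply qs_morphism_of_discrete; [| exact Hcover].
    apply prodFam_discFam; [exact Hdisc | intros tau Htau; exact Htau]. }
  apply clos_refl_trans_incl.
  intros X Y [HXY | HYX]; [left | right]; apply Hhtp; assumption.
Qed.

Theorem proposition3p5 (C D : Category) (S : MorFamily C) (S' : MorFamily D)
  (HS : is_quasi_schemoid S) (HS' : is_quasi_schemoid S')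
  (F G : Functor C D) (HF : qs_morphism S S' F) (HG : qs_morphism S S' G) :
  (qs_htpc S S' F G -> strong_htpc F G) /\
  ((forall sigma, S sigma <-> @discFam C sigma) ->
     (qs_htpc S S' F G <-> strong_htpc F G)).
Proof.
  split; [apply qs_htpc_strong |].
  intros Hdisc; split; [apply qs_htpc_strong |].
  destruct HS' as [[_ [Hcover _]] _].
  apply strong_htpc_qs_discrete; [| exact Hcover].
  intros sigma; apply Hdisc.
Qed.
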